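(* Let $n_u<n$, $n_b=n-n_u$, $\mathbf{A}\in\mathbb{R}^{n_u\times n_b}$, $\mathbf{C}=[\mathbf{I}_{n_u}\;\;-\mathbf{A}]$. For $j=1,\dots,p$ ($p\ge2$) let $\mathbf{L}_j\in\{0,1\}^{n_j\times n}$ be selection matrices (rows are distinct rows of $\mathbf{I}_n$) such that every variable $i\in\{1,\dots,n\}$ is selected by at least one $\mathbf{L}_j$; let $m=\sum_j n_j$ and $\mathbf{K}=[\mathbf{L}_1^\top\cdots\mathbf{L}_p^\top]^\top\in\{0,1\}^{m\times n}$. Let $\mathbf{y}$ be a random vector in $\mathbb{R}^n$ with $\mathbf{C}\mathbf{y}=\mathbf{0}$ and mean $\boldsymbol{\mu}=E(\mathbf{y})$, and let the base forecasts satisfy $\widehat{\mathbf{y}}=\mathbf{K}\mathbf{y}+\boldsymbol{\varepsilon}$, where $\boldsymbol{\varepsilon}=[\boldsymbol{\varepsilon}^{1\top}\cdots\boldsymbol{\varepsilon}^{p\top}]^\top$, $\boldsymbol{\varepsilon}^j\in\mathbb{R}^{n_j}$, is a random vector with $E(\boldsymbol{\varepsilon})=\mathbf{0}$ and $E(\boldsymbol{\varepsilon}\boldsymbol{\varepsilon}^\top)=\mathbf{W}$ positive definite, with $(j,j)$ diagonal block $\mathbf{W}_j=E(\boldsymbol{\varepsilon}^j\boldsymbol{\varepsilon}^{j\top})\in\mathbb{R}^{n_j\times n_j}$. Define $\mathbf{W}_c=(\mathbf{K}^\top\mathbf{W}^{-1}\mathbf{K})^{-1}$, $\boldsymbol{\Omega}=\mathbf{W}^{-1}\mathbf{K}\mathbf{W}_c$,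 $\mathbf{M}=\mathbf{I}_n-\mathbf{W}_c\mathbf{C}^\top(\mathbf{C}\mathbf{W}_c\mathbf{C}^\top)^{-1}\mathbf{C}$ and $\widetilde{\mathbf{y}}^c=\mathbf{M}\boldsymbol{\Omega}^\top\widehat{\mathbf{y}}$. Then $E(\widetilde{\mathbf{y}}^c)=\boldsymbol{\mu}$, the error covariance matrix is $$\widetilde{\mathbf{W}}_c=E\big[(\widetilde{\mathbf{y}}^c-\mathbf{y})(\widetilde{\mathbf{y}}^c-\mathbf{y})^\top\big]=\mathbf{M}\mathbf{W}_c,$$ and for every $j=1,\dots,p$, $$\mathbf{L}_j\widetilde{\mathbf{W}}_c\mathbf{L}_j^\top\preceq\mathbf{L}_j\mathbf{W}_c\mathbf{L}_j^\top\preceq\mathbf{W}_j,$$ where $\preceq$ denotes the Loewner (positive semidefinite) order.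
   Context: $\widetilde{\mathbf{y}}^c$ is the optimal linear coherent combined forecast obtained by minimizing $(\widehat{\mathbf{y}}-\mathbf{K}\mathbf{y})^\top\mathbf{W}^{-1}(\widehat{\mathbf{y}}-\mathbf{K}\mathbf{y})$ subject to $\mathbf{C}\mathbf{y}=\mathbf{0}$. $\mathbf{X}\preceq\mathbf{Y}$ means $\mathbf{Y}-\mathbf{X}$ is positive semidefinite. *)

From HB Require Import structures.
From mathcomp Require Import all_boot all_order all_algebra.
From mathcomp Require Import all_classical all_reals all_analysis.
Set Implicit Arguments. Unset Strict Implicit. Unset Printing Implicit Defensive.
Import Order.TTheory GRing.Theory Num.Theory.
Local Open Scope ring_scope.

Definition psdmx (R : realFieldType) (k : nat) (X : 'M[R]_k) : Prop :=
  X^T = X /\ forall x : 'cV[R]_k, 0 <= (x^T *m X *m x) 0 0.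

Definition pdmx (R : realFieldType) (k : nat) (X : 'M[R]_k) : Prop :=
  X^T = X /\ forall x : 'cV[R]_k, x != 0 -> 0 < (x^T *m X *m x) 0 0.

Definition loewner_le (R : realFieldType) (k : nat) (X Y : 'M[R]_k) : Prop :=
  psdmx (Y - X).

Definition selection_mx (R : ringType) (k n : nat) (L : 'M[R]_(k, n)) : Prop :=
  exists s : 'I_k -> 'I_n, injective s /\
    L = \matrix_(r < k, c < n) ((c == s r)%:R : R).

Definition Emx d (T : measurableType d) (R : realType) (P : probability T R)
  (a b : nat) (X : T -> 'M[R]_(a, b)) : 'M[R]_(a, b) :=
  \matrix_(i < a, j < b) fine ('E_P[fun t => X t i j])%E.

Definition integrable_mx d (T : measurableType d) (R : realType)
  (P : probability T R) (a b : nat) (X : T -> 'M[R]_(a, b)) : Prop :=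
  forall i j, P.-integrable setT (fun t => (X t i j)%:E).

(* Because every variable is selected, [K] has full column rank, and [C = [I -A]] has
   full row rank; hence [Wc] and [C Wc C^T] are positive definite.  [Omega^T] is a left
   inverse of [K] and [M] fixes every coherent vector, so [yc - y = M Omega^T eps].  This
   gives unbiasedness and [Wtc = M (Omega^T W Omega) M^T = M Wc M^T = M Wc].  Finally
   [Wc - M Wc = Wc C^T (C Wc C^T)^-1 C Wc] is positive semidefinite, and by the
   Gauss-Markov argument [L_j Wc L_j^T] is dominated by the covariance [W_j] of the
   unbiased estimator of [L_j y] that only uses the j-th block of base forecasts. *)
From HB Require Import structures.
From mathcomp Require Import all_boot all_order all_algebra.
From mathcomp Require Import all_classical all_reals all_analysis.
Import Order.TTheory GRing.Theory Num.Theory.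
Local Open Scope ring_scope.
Set Implicit Arguments. Unset Strict Implicit.

Section PositiveDefinite.
Variable R : realFieldType.
Implicit Types k l : nat.

Lemma pdmx_psdmx k (X : 'M[R]_k) : pdmx X -> psdmx X.
Proof.
move=> [symX posX]; split => // x; have [->|/posX/ltW //] := eqVneq x 0.
by rewrite mulmx0 mxE.
Qed.

Lemma pdmx_unitmx k (X : 'M[R]_k) : pdmx X -> X \in unitmx.
Proof.
move=> [_ posX]; rewrite -row_free_unit -kermx_eq0; apply/eqP/matrixP => i j.
have uX0 : row i (kermx X) *m X = 0 by rewrite -row_mul mulmx_ker row0.
have /eqP u0 : (row i (kermx X))^T == 0.
  by apply: contraT => /posX; rewrite trmxK uX0 mul0mx mxE ltxx.
by have := congr1 (fun v : 'cV_k => v j 0) u0; rewrite !mxE.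
Qed.

Lemma pdmx_inv k (X : 'M[R]_k) : pdmx X -> pdmx (invmx X).
Proof.
move=> pdX; have uX := pdmx_unitmx pdX; have [symX posX] := pdX.
split=> [|x x0]; first by rewrite trmx_inv symX.
pose z := invmx X *m x; have xE : x = X *m z by rewrite mulKVmx.
have z0 : z != 0 by apply: contra x0 => /eqP z0; rewrite xE z0 mulmx0.
have := posX _ z0; congr (0 < _ _ _).
by clearbody z; subst x; rewrite trmx_mul symX -!mulmxA mulKVmx.
Qed.

Lemma psdmx_mulmx_tr k l (X : 'M[R]_k) (B : 'M[R]_(l, k)) :
  psdmx X -> psdmx (B *m X *m B^T).
Proof.
move=> [symX posX]; split=> [|x]; first by rewrite !trmx_mul trmxK symX mulmxA.
by have := posX (B^T *m x); rewrite trmx_mul trmxK !mulmxA.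
Qed.

Lemma pdmx_tr_mulmx k l (X : 'M[R]_k) (B : 'M[R]_(k, l)) :
  pdmx X -> (forall x : 'cV_l, B *m x = 0 -> x = 0) -> pdmx (B^T *m X *m B).
Proof.
move=> [symX posX] injB; split=> [|x x0]; first by rewrite !trmx_mul trmxK symX mulmxA.
have Bx0 : B *m x != 0 by apply: contra x0 => /eqP /injB ->.
by have := posX _ Bx0; rewrite trmx_mul !mulmxA.
Qed.

Lemma loewner_le_mulmx_tr k l (X Y : 'M[R]_k) (B : 'M[R]_(l, k)) :
  loewner_le X Y -> loewner_le (B *m X *m B^T) (B *m Y *m B^T).
Proof. by move=> /(psdmx_mulmx_tr B); rewrite /loewner_le mulmxBr mulmxBl. Qed.

End PositiveDefinite.

Section CoherentProjection.
Variables (R : realFieldType) (n k : nat) (V : 'M[R]_n) (C : 'M[R]_(k, n)).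

(* The [V^-1]-orthogonal projection onto [ker C]; the paper's [M] is [coherent_proj Wc C]. *)
Definition coherent_proj : 'M[R]_n :=
  1%:M - V *m C^T *m invmx (C *m V *m C^T) *m C.

Lemma coherent_projE (v : 'cV_n) : C *m v = 0 -> coherent_proj *m v = v.
Proof. by move=> Cv0; rewrite mulmxBl mul1mx -[_ *m C *m v]mulmxA Cv0 mulmx0 subr0. Qed.

Hypotheses (pdV : pdmx V) (injCt : forall x : 'cV_k, C^T *m x = 0 -> x = 0).

Let S := C *m V *m C^T.

Let pdS : pdmx S.
Proof. by have := pdmx_tr_mulmx pdV injCt; rewrite trmxK. Qed.

Lemma coherent_proj_cov : coherent_proj *m V *m coherent_proj^T = coherent_proj *m V.
Proof.
have [symV _] := pdV; have [symS _] := pdS.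
have projVCt : coherent_proj *m V *m C^T = 0.
  rewrite !mulmxBl mul1mx.
  have -> : V *m C^T *m invmx S *m C *m V *m C^T = V *m C^T *m (invmx S *m S).
    by rewrite !mulmxA.
  by rewrite mulVmx ?pdmx_unitmx // mulmx1 subrr.
rewrite [coherent_proj^T]linearB /= trmx1 mulmxBr mulmx1 !trmx_mul trmxK trmx_inv symS symV.
by rewrite !mulmxA projVCt !mul0mx subr0.
Qed.

Lemma coherent_proj_cov_le : loewner_le (coherent_proj *m V) V.
Proof.
have [symV _] := pdV; rewrite /loewner_le.
have -> : V - coherent_proj *m V = (V *m C^T) *m invmx S *m (V *m C^T)^T.
  by rewrite mulmxBl mul1mx opprB addrC subrK trmx_mul trmxK symV !mulmxA.
exact/psdmx_mulmx_tr/pdmx_psdmx/pdmx_inv.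
Qed.

End CoherentProjection.

Section GeneralizedLeastSquares.
Variables (R : realFieldType) (m n : nat) (W : 'M[R]_m) (K : 'M[R]_(m, n)).

Definition gls_cov : 'M[R]_n := invmx (K^T *m invmx W *m K).
Definition gls_weights : 'M[R]_(m, n) := invmx W *m K *m gls_cov.

Hypotheses (pdW : pdmx W) (injK : forall x : 'cV_n, K *m x = 0 -> x = 0).

Let gls_info_pd : pdmx (K^T *m invmx W *m K).
Proof. exact/pdmx_tr_mulmx/injK/pdmx_inv. Qed.

Lemma gls_cov_pd : pdmx gls_cov.
Proof. exact/pdmx_inv. Qed.

Lemma mulmx_gls_weights : W *m gls_weights = K *m gls_cov.
Proof. by rewrite /gls_weights -!mulmxA mulKVmx ?pdmx_unitmx. Qed.

Lemma gls_weights_unbiased : gls_weights^T *m K = 1%:M.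
Proof.
have [symW _] := pdW; have [symWc _] := gls_cov_pd.
by rewrite !trmx_mul symWc trmx_inv symW -mulmxA mulVmx // pdmx_unitmx.
Qed.

Lemma gls_weights_cov : gls_weights^T *m W *m gls_weights = gls_cov.
Proof. by rewrite -mulmxA mulmx_gls_weights mulmxA gls_weights_unbiased mul1mx. Qed.

(* Gauss-Markov: the gap is [D W D^T] for [D = B - B K Omega^T], because [D W Omega = 0]. *)
Lemma gls_cov_le l (B : 'M[R]_(l, m)) :
  loewner_le (B *m K *m gls_cov *m (B *m K)^T) (B *m W *m B^T).
Proof.
have [symW _] := pdW; have [symWc _] := gls_cov_pd.
set Om := gls_weights; set BK := B *m K.
have BWOm : B *m W *m Om = BK *m gls_cov by rewrite -mulmxA mulmx_gls_weights mulmxA.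
have BKOmWB : BK *m Om^T *m W *m B^T = BK *m gls_cov *m BK^T.
  have := congr1 trmx BWOm.
  rewrite !(trmx_mul _ Om) (trmx_mul B) (trmx_mul BK) symW symWc => OmWB.
  by rewrite -!mulmxA OmWB mulmxA.
have BKOmWOm : BK *m Om^T *m W *m Om *m BK^T = BK *m gls_cov *m BK^T.
  by rewrite -(mulmxA BK) -(mulmxA BK) gls_weights_cov.
rewrite /loewner_le; clearbody Om.
have -> : B *m W *m B^T - BK *m gls_cov *m BK^T =
    (B - BK *m Om^T) *m W *m (B - BK *m Om^T)^T.
  rewrite linearB /= (trmx_mul BK) trmxK !mulmxBl !mulmxBr !mulmxA BWOm BKOmWB BKOmWOm.
  by rewrite subrr subr0.
exact/psdmx_mulmx_tr/pdmx_psdmx.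
Qed.

End GeneralizedLeastSquares.

Lemma selection_mx_rowsub (R : nzRingType) k n (L : 'M[R]_(k, n)) :
  selection_mx L -> exists s : 'I_k -> 'I_n, L = rowsub s 1%:M.
Proof.
by move=> [s [_ ->]]; exists s; apply/matrixP => r c; rewrite !mxE eq_sym.
Qed.

Lemma mxcol_selection_inj (R : nzRingType) p n (nj : 'I_p -> nat)
    (L : forall j, 'M[R]_(nj j, n)) :
  (forall j, selection_mx (L j)) ->
  (forall i : 'I_n, exists j, exists r : 'I_(nj j), L j r i != 0) ->
  forall x : 'cV_n, \mxcol_j L j *m x = 0 -> x = 0.
Proof.
move=> selL coverL x Lx0; apply/matrixP => i k; rewrite (ord1 k) mxE.
have [j [r Lri]] := coverL i; have [s Ls] := selection_mx_rowsub (selL j).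
have Ljx0 : L j *m x = 0 by rewrite -(mxcolK L j) submxcol_mul Lx0 submxcol0.
have -> : i = s r.
  by apply/eqP; apply: contraNT Lri; rewrite Ls !mxE eq_sym => /negbTE ->.
by have := congr1 (fun v : 'cV_(nj j) => v r 0) Ljx0; rewrite Ls mul_rowsub_mx mul1mx !mxE.
Qed.

Lemma row_mx1_tr_inj (R : nzRingType) k n (B : 'M[R]_(k, n)) (x : 'cV_k) :
  (row_mx 1%:M B)^T *m x = 0 -> x = 0.
Proof.
by rewrite tr_row_mx trmx1 mul_col_mx mul1mx => /eqP; rewrite col_mx_eq0 => /andP[/eqP].
Qed.

Lemma submxblock_mulmx (R : pzRingType) p (nj : 'I_p -> nat)
    (A : 'M[R]_(\sum_j nj j)) i j :
  submxblock A i j = submxcol 1%:M i *m A *m (submxcol 1%:M j)^T.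
Proof.
by rewrite submxcol_mul mul1mx tr_submxcol trmx1 mul_submxrow mulmx1 submxblockEv.
Qed.

Section MatrixExpectation.
Variables (R : realType) (d : measure_display) (T : measurableType d) (P : probability T R).

Let EFin_lincomb (I : finType) (c : I -> R) (f : I -> T -> R) :
  (fun t => (\sum_i c i * f i t)%:E) = (fun t => \sum_i (c i)%:E * (f i t)%:E)%E.
Proof. by apply: funext => t; rewrite -sumEFin; under eq_bigr do rewrite EFinM. Qed.

Lemma integrable_lincomb (I : finType) (c : I -> R) (f : I -> T -> R) :
  (forall i, P.-integrable setT (fun t => (f i t)%:E)) ->
  P.-integrable setT (fun t => (\sum_i c i * f i t)%:E).
Proof.
move=> intf; rewrite EFin_lincomb.
by apply: integrable_sum => // i _; apply: integrableZl.
Qed.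

Lemma expectation_lincomb (I : finType) (c : I -> R) (f : I -> T -> R) :
  (forall i, P.-integrable setT (fun t => (f i t)%:E)) ->
  fine ('E_P[fun t => (\sum_i c i * f i t)%R])%E = \sum_i c i * fine ('E_P[f i])%E.
Proof.
move=> intf; rewrite unlock EFin_lincomb integral_sum // => [|i]; last exact: integrableZl.
under eq_bigr do rewrite integralZl // -[X in (_ * X)%E]fineK ?integrable_fin_num //.
by rewrite sumEFin.
Qed.

Lemma integrable_mx_mull a b c (B : 'M[R]_(c, a)) (X : T -> 'M[R]_(a, b)) :
  integrable_mx P X -> integrable_mx P (fun t => B *m X t).
Proof.
move=> intX i j; under eq_fun do rewrite mxE.
exact: integrable_lincomb (fun k => intX k j).
Qed.

Lemma Emx_mull a b c (B : 'M[R]_(c, a)) (X : T -> 'M[R]_(a, b)) :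
  integrable_mx P X -> Emx P (fun t => B *m X t) = B *m Emx P X.
Proof.
move=> intX; apply/matrixP => i j; rewrite !mxE.
under eq_fun do rewrite mxE.
rewrite expectation_lincomb => [|k]; last exact: intX.
by apply: eq_bigr => k _; rewrite mxE.
Qed.

Lemma integrable_mx_tr a b (X : T -> 'M[R]_(a, b)) :
  integrable_mx P X -> integrable_mx P (fun t => (X t)^T).
Proof. by move=> intX i j; under eq_fun do rewrite mxE. Qed.

Lemma Emx_tr a b (X : T -> 'M[R]_(a, b)) : Emx P (fun t => (X t)^T) = (Emx P X)^T.
Proof. by apply/matrixP => i j; rewrite !mxE; under eq_fun do rewrite mxE. Qed.

Lemma integrable_mx_mulr a b c (D : 'M[R]_(b, c)) (X : T -> 'M[R]_(a, b)) :
  integrable_mx P X -> integrable_mx P (fun t => X t *m D).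
Proof.
move=> /integrable_mx_tr /(integrable_mx_mull D^T) /integrable_mx_tr.
by under eq_fun do rewrite trmx_mul !trmxK.
Qed.

Lemma Emx_mulr a b c (D : 'M[R]_(b, c)) (X : T -> 'M[R]_(a, b)) :
  integrable_mx P X -> Emx P (fun t => X t *m D) = Emx P X *m D.
Proof.
move=> intX; apply: trmx_inj; rewrite -Emx_tr trmx_mul -Emx_tr -Emx_mull.
  by under eq_fun do rewrite trmx_mul.
exact: integrable_mx_tr.
Qed.

Lemma integrable_mx_add a b (X Y : T -> 'M[R]_(a, b)) :
  integrable_mx P X -> integrable_mx P Y -> integrable_mx P (fun t => X t + Y t).
Proof. by move=> intX intY i j; under eq_fun do rewrite mxE EFinD; apply: integrableD. Qed.

Lemma Emx_add a b (X Y : T -> 'M[R]_(a, b)) : integrable_mx P X -> integrable_mx P Y ->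
  Emx P (fun t => X t + Y t) = Emx P X + Emx P Y.
Proof.
move=> intX intY; apply/matrixP => i j; rewrite !mxE unlock.
under eq_integral do rewrite mxE EFinD.
by rewrite integralD // fineD // integrable_fin_num.
Qed.

End MatrixExpectation.

Theorem corollary1 (R : realType) (d : measure_display) (T : measurableType d)
  (P : probability T R) (nu nb : nat)
  (A : 'M[R]_(nu, nb)) (p : nat) (nj : 'I_p -> nat)
  (L : forall j : 'I_p, 'M[R]_(nj j, nu + nb))
  (y : T -> 'cV[R]_(nu + nb)) (eps : T -> 'cV[R]_(\sum_(j < p) nj j))
  (W : 'M[R]_(\sum_(j < p) nj j)) :
  (nu < nu + nb)%N ->
  (1 < p)%N ->
  (forall j, selection_mx (L j)) ->
  (forall i : 'I_(nu + nb), exists j : 'I_p, exists r : 'I_(nj j), L j r i != 0) ->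
  let C : 'M[R]_(nu, nu + nb) := row_mx 1%:M (- A) in
  let K : 'M[R]_(\sum_(j < p) nj j, nu + nb) := \mxcol_(j < p) L j in
  (forall t, C *m y t = 0) ->
  integrable_mx P y ->
  integrable_mx P eps ->
  integrable_mx P (fun t => eps t *m (eps t)^T) ->
  Emx P eps = 0 ->
  Emx P (fun t => eps t *m (eps t)^T) = W ->
  pdmx W ->
  let mu := Emx P y in
  let yhat := fun t => K *m y t + eps t in
  let Wc := invmx (K^T *m invmx W *m K) in
  let Omega := invmx W *m K *m Wc in
  let M := 1%:M - Wc *m C^T *m invmx (C *m Wc *m C^T) *m C in
  let yc := fun t => M *m Omega^T *m yhat t in
  let Wtc := Emx P (fun t => (yc t - y t) *m (yc t - y t)^T) in
  [/\ integrable_mx P yc /\ Emx P yc = mu,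
      integrable_mx P (fun t => (yc t - y t) *m (yc t - y t)^T) /\ Wtc = M *m Wc &
      forall j : 'I_p,
        loewner_le (L j *m Wtc *m (L j)^T) (L j *m Wc *m (L j)^T) /\
        loewner_le (L j *m Wc *m (L j)^T) (submxblock W j j)].
Proof.
move=> _ _ selL coverL C K Cy0 inty inteps inteps2 Eeps0 Eeps2 pdW mu yhat Wc Omega M yc Wtc.
have injK := mxcol_selection_inj selL coverL.
have injCt : forall x, C^T *m x = 0 -> x = 0 := @row_mx1_tr_inj _ _ _ (- A).
have pdWc : pdmx Wc := gls_cov_pd pdW injK.
have OmK : Omega^T *m K = 1%:M := gls_weights_unbiased pdW injK.
have OmWOm : Omega^T *m W *m Omega = Wc := gls_weights_cov pdW injK.
set G := M *m Omega^T.
have ycE : yc = fun t => y t + G *m eps t.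
  apply: funext => t; rewrite /yc /yhat mulmxDr -(mulmxA M) (mulmxA _ K) OmK mul1mx.
  by rewrite coherent_projE.
have errE : (fun t => (yc t - y t) *m (yc t - y t)^T) =
              fun t => G *m (eps t *m (eps t)^T) *m G^T.
  by apply: funext => t; rewrite ycE addrAC subrr add0r trmx_mul !mulmxA.
have intG : integrable_mx P (fun t => G *m eps t) := integrable_mx_mull G inteps.
have intGG : integrable_mx P (fun t => G *m (eps t *m (eps t)^T)) :=
  integrable_mx_mull G inteps2.
have WtcE : Wtc = M *m Wc.
  rewrite /Wtc errE Emx_mulr // Emx_mull // Eeps2 trmx_mul trmxK.
  have -> : M *m Omega^T *m W *m (Omega *m M^T) = M *m (Omega^T *m W *m Omega) *m M^T.
    by rewrite !mulmxA.
  by rewrite OmWOm coherent_proj_cov.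
split.
- rewrite ycE Emx_add // Emx_mull // Eeps0 mulmx0 addr0.
  by split=> //; apply: integrable_mx_add.
- by rewrite errE; split=> //; apply: integrable_mx_mulr.
move=> j; split.
  by rewrite WtcE; apply/loewner_le_mulmx_tr/coherent_proj_cov_le.
have LjE : L j = submxcol 1%:M j *m K by rewrite submxcol_mul mul1mx mxcolK.
by rewrite submxblock_mulmx LjE; apply: gls_cov_le.
Qed.
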